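(* Let $N_1,\dots,N_d$ be positive integers and $X\subseteq[N_1]\times\cdots\times[N_d]$. For any power of two $s$ with $1\le s\le\min_{1\le i\le d}N_i$, \[ f(s,X)\le5^d\frac{N_1\cdots N_d}{s^{d+1}}|X|. \]
   Context: $[N]=\{1,\dots,N\}$. For $\mathbf{b}\in\mathbb{Z}^d\setminus\{\mathbf{0}\}$, points $\mathbf{x},\mathbf{x}'$ are congruent mod $\mathbf{b}$ if $\mathbf{x}-\mathbf{x}'\in\mathbb{Z}\mathbf{b}$. For each $\mathbf{b}\ne\mathbf{0}$ and each congruence class $I$ of $X$ modulo $\mathbf{b}$, list $I=\{\mathbf{x}_1,\dots,\mathbf{x}_l\}$ in increasing order of $\mathbf{x}_u\cdot\mathbf{b}$. $\mathcal{C}_X$ is the collection, over all such $(\mathbf{b},I)$, of the sets $\{\mathbf{x}_u:(j-1)s'+1\le u\le js'\}$ with $s'=2^t$ ($t\ge0$) and $1\le j\le\lfloor l/s'\rfloor$. $f(s,X)$ is the number of sets of size $s$ in $\mathcal{C}_X$. *)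

From HB Require Import structures.
From mathcomp Require Import all_boot all_order all_algebra.
From mathcomp Require Import finmap.
From mathcomp Require Import boolp.
Set Implicit Arguments. Unset Strict Implicit. Unset Printing Implicit Defensive.
Import Order.TTheory GRing.Theory Num.Theory.
Local Open Scope fset_scope.
Local Open Scope ring_scope.

Definition point (d : nat) := {ffun 'I_d -> int}.

Definition dotz (d : nat) (x b : point d) : int := \sum_(i < d) x i * b i.

Definition congr_mod (d : nat) (b x x' : point d) : Prop :=
  exists k : int, forall i : 'I_d, x i - x' i = k * b i.

Definition cclass (d : nat) (X : {fset point d}) (b x : point d) : {fset point d} :=
  [fset y in X | `[< congr_mod b y x >]].

Definition sorted_class (d : nat) (b : point d) (I : {fset point d}) : seq (point d) :=
  sort (fun x y => dotz x b <= dotz y b) (enum_fset I).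

(* The block {x_u : (j-1)s'+1 <= u <= j s'} (1-indexed u, j). *)
Definition block (d : nat) (b : point d) (I : {fset point d}) (s' j : nat) : {fset point d} :=
  [fset x in take s' (drop ((j.-1) * s')%N (sorted_class b I))].

(* S belongs to the collection C_X: for some b <> 0, some congruence class
   I (the class of some x in X) of X modulo b, with l = |I|, some s' = 2^t
   and some 1 <= j <= floor(l/s'), S is the j-th block of s' consecutive
   elements of I ordered by x . b. *)
Definition in_CX (d : nat) (X : {fset point d}) (S : {fset point d}) : Prop :=
  exists (b x : point d) (t j : nat),
    [/\ exists i : 'I_d, b i != 0,
        x \in X,
        (1 <= j <= #|` cclass X b x| %/ 2 ^ t)%N
      & S = block b (cclass X b x) (2 ^ t) j].

Definition f_count (d : nat) (s : nat) (X : {fset point d}) : nat :=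
  #|` [fset S in fpowerset X | (#|` S| == s) && `[< in_CX X S >]] |.

From mathcomp Require Import all_boot all_order all_algebra.
From mathcomp Require Import finmap boolp zify.
Import Order.TTheory GRing.Theory Num.Theory.
Local Open Scope fset_scope.
Local Open Scope ring_scope.
Set Implicit Arguments. Unset Strict Implicit. Unset Printing Implicit Defensive.

(* Double counting: [s f(s,X)] counts the pairs [(y, S)] with [y \in S], [S] a set of
   size [s] in [C_X].  For fixed [y], such an [S] is determined by its direction [b]:
   it is the block of size [s] through [y] in the class of [y] modulo [b].  The [s]
   points of [S] are [x + k b] for distinct integers [k] and lie in the box, so
   [(s - 1) |b_i| <= N_i - 1]; hence at most [prod_i (2 (N_i - 1) / (s - 1) + 1)
   <= prod_i 5 N_i / s] directions occur.  For [s = 1] the only such set is [{y}]. *)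

Lemma index_take_drop (T : eqType) (s : seq T) (y : T) m k :
  uniq s -> y \in take k (drop m s) -> (m <= index y s < m + k)%N.
Proof.
move=> s_uniq y_in; have := y_in; rewrite -index_mem => q_lt.
move: (nth_index y y_in) q_lt; move: (index y _) => q.
rewrite size_take_min size_drop => nth_q q_lt.
have q_lt_k : (q < k)%N by move: q_lt; move: (size s - m)%N => z; lia.
move: nth_q; rewrite nth_take // nth_drop => <-.
have mq_lt : (m + q < size s)%N by move: q_lt; move: (size s) => z; lia.
by rewrite index_uniq //; lia.
Qed.

Lemma sorted_lt_spread (a : int) (K : seq int) :
  sorted <%R (a :: K) -> (size K)%:Z <= last a K - a.
Proof.
elim: K a => [|k K IH] a /=; first by rewrite subrr.
by case/andP=> a_lt_k /IH; lia.
Qed.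

Lemma uniq_int_spread (K : seq int) : uniq K -> (0 < size K)%N ->
  exists a c, [/\ a \in K, c \in K & ((size K).-1)%:Z <= c - a].
Proof.
move=> K_uniq K_gt0.
have sortK_lt : sorted <%R (sort <=%R K) by rewrite sort_lt_sorted.
have permK : perm_eq (sort <=%R K) K by rewrite perm_sort.
move: sortK_lt permK; case: (sort <=%R K) => [_ /perm_size /=|a K' /sorted_lt_spread spread permK].
  by lia.
exists a, (last a K'); rewrite -!(perm_mem permK) mem_head mem_last -(perm_size permK).
by split.
Qed.

Lemma abs_step_bound (n N : nat) (D B y1 y2 : int) :
  n%:Z <= D -> D * B = y2 - y1 -> 1 <= y1 <= N%:Z -> 1 <= y2 <= N%:Z ->
  (n * `|B| <= N - 1)%N.
Proof.
move=> n_le_D DB y1_range y2_range.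
suff : n%:Z * `|B|%:Z <= (N - 1)%N%:Z by rewrite -PoszM lez_nat.
by case: (lerP 0 B) => B_sign; [rewrite gez0_abs // | rewrite ltz0_abs //]; nia.
Qed.

(* [s / (s - 1) <= 2] turns [s (2 (N - 1) / (s - 1) + 1)] into at most [4 (N - 1) + N]. *)
Lemma step_box_bound (s N : nat) : (2 <= s)%N -> (s <= N)%N ->
  (s * (2 * ((N - 1) %/ s.-1)).+1 <= 5 * N)%N.
Proof.
move=> s_ge2 s_le_N.
have : ((N - 1) %/ s.-1 * s.-1 <= N - 1)%N by rewrite -leq_divRL //; lia.
by move: ((N - 1) %/ s.-1)%N => q; nia.
Qed.

Lemma double_count (T : choiceType) (X : {fset T}) (F : {fset {fset T}}) (s : nat) :
  (forall S, S \in F -> S `<=` X /\ #|` S| = s) ->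
  (s * #|` F| = \sum_(y <- X) #|` [fset S in F | y \in S]|)%N.
Proof.
move=> F_sub.
under eq_bigr => y _ do rewrite card_fset_sum1 -big_fset_condE big_mkcond /=.
rewrite exchange_big /= card_fset_sum1 big_distrr /=.
rewrite big_seq [in RHS]big_seq; apply: eq_bigr => S SF.
rewrite muln1 -big_mkcond /= big_fset_condE -card_fset_sum1.
have [S_sub <-] := F_sub S SF; congr (size (enum_fset _)).
apply/fsetP => y; rewrite in_fset /= inE andbC.
by case yS: (y \in S) => //=; rewrite (fsubsetP S_sub).
Qed.

Section Counting.
Variable d : nat.
Implicit Types (b x y z : point d) (X I S : {fset point d}).

Lemma congr_mod_sym b x y : congr_mod b x y -> congr_mod b y x.
Proof. by case=> k xy; exists (- k) => i; rewrite mulNr -xy opprB. Qed.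

Lemma congr_mod_trans b x y z : congr_mod b x y -> congr_mod b y z -> congr_mod b x z.
Proof.
case=> k xy [k' yz]; exists (k + k') => i.
by rewrite mulrDl -xy -yz addrA subrK.
Qed.

Lemma mem_cclass X b x y : (y \in cclass X b x) = (y \in X) && `[< congr_mod b y x >].
Proof. by rewrite /cclass in_fset /= inE. Qed.

Lemma cclass_eq X b x y : y \in cclass X b x -> cclass X b x = cclass X b y.
Proof.
rewrite mem_cclass => /andP[_ /asboolP yx].
apply/fsetP => z; rewrite !mem_cclass; case: (z \in X) => //=.
apply/asboolP/asboolP => zx; first exact: congr_mod_trans zx (congr_mod_sym yx).
exact: congr_mod_trans zx yx.
Qed.

Lemma sorted_class_uniq b I : uniq (sorted_class b I).
Proof. by rewrite sort_uniq fset_uniq. Qed.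

Lemma block_subset b I s j : block b I s j `<=` I.
Proof. by apply/fsubsetP => y; rewrite in_fset => /mem_take /mem_drop; rewrite mem_sort. Qed.

Lemma card_block b I s j : (0 < s)%N -> (0 < j <= #|` I| %/ s)%N -> #|` block b I s j| = s.
Proof.
move=> s_gt0 /andP[j_gt0]; rewrite leq_divRL // => js_le.
rewrite /block card_fseq undup_id; last by rewrite take_uniq // drop_uniq // sorted_class_uniq.
rewrite size_take size_drop size_sort.
case: j j_gt0 js_le => // j _ /=; rewrite mulSn; move: (j * s)%N #|` I| => m n js_le.
by case: ltnP => //; lia.
Qed.

Lemma block_index b I s j y : (0 < s)%N -> y \in block b I s j ->
  block b I s j = block b I s (index y (sorted_class b I) %/ s).+1.
Proof.
move=> s_gt0; rewrite in_fset => /(index_take_drop (sorted_class_uniq b I)) /andP[lo hi].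
suff idx : j.-1 = (index y (sorted_class b I) %/ s)%N by rewrite /block idx.
by apply/eqP; rewrite eqn_leq leq_divRL // -[(_ %/ _ <= _)%N]ltnS ltn_divLR //; lia.
Qed.

Lemma class_step_bound X (N : 'I_d -> nat) b x S i0 i :
  (forall y, y \in X -> forall i, 1 <= y i <= (N i)%:Z) ->
  b i0 != 0 -> S `<=` cclass X b x -> ((#|` S|).-1 * `|b i| <= N i - 1)%N.
Proof.
move=> X_box b_i0 S_sub.
have [-> // | S_gt0] := posnP #|` S|.
have memS y : y \in S -> y \in X /\ congr_mod b y x.
  by move=> /(fsubsetP S_sub); rewrite mem_cclass => /andP[? /asboolP].
pose k y := ((y i0 - x i0) %/ b i0)%Z.
have kP y : y \in S -> forall i, y i = x i + k y * b i.
  move=> /memS [_ [c yx]] i'; have -> : k y = c by rewrite /k yx mulzK.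
  by rewrite -yx addrC subrK.
have k_inj : {in S &, injective k}.
  by move=> y1 y2 y1S y2S k12; apply/ffunP => i'; rewrite (kP _ y1S) (kP _ y2S) k12.
have kS_uniq : uniq [seq k y | y <- S] by rewrite map_inj_in_uniq ?fset_uniq.
have kS_gt0 : (0 < size [seq k y | y <- S])%N by rewrite size_map.
have [a [c [aK cK ac]]] := uniq_int_spread kS_uniq kS_gt0.
move/mapP: aK ac => [y1 y1S ->]; move/mapP: cK => [y2 y2S ->]; rewrite size_map => ac.
apply: (abs_step_bound ac _ (X_box _ (memS _ y1S).1 i) (X_box _ (memS _ y2S).1 i)).
by rewrite (kP _ y2S) (kP _ y1S) mulrBl; lia.
Qed.

Definition CX_of_size (s : nat) X : {fset {fset point d}} :=
  [fset S in fpowerset X | (#|` S| == s) && `[< in_CX X S >]].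

Lemma f_countE s X : f_count s X = #|` CX_of_size s X|.
Proof. by []. Qed.

Lemma mem_CX_of_size s X S :
  S \in CX_of_size s X -> [/\ S `<=` X, #|` S| = s & in_CX X S].
Proof. by rewrite in_fset /= inE fpowersetE => /andP[-> /andP[/eqP -> /asboolP]]. Qed.

Definition block_through X (s : nat) b y : {fset point d} :=
  block b (cclass X b y) s (index y (sorted_class b (cclass X b y)) %/ s).+1.

Lemma in_CX_block_through X S y : in_CX X S -> y \in S ->
  exists b, [/\ exists i, b i != 0, S `<=` cclass X b y & S = block_through X #|` S| b y].
Proof.
case=> b [x [t [j [b_nz _ j_range ->]]]] yS.
have two_t_gt0 : (0 < 2 ^ t)%N by rewrite expn_gt0.
have classE := cclass_eq (fsubsetP (block_subset _ _ _ _) _ yS).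
exists b; rewrite -classE block_subset card_block //; split => //.
by rewrite /block_through -classE; apply: block_index.
Qed.

Definition box_index (M : 'I_d -> nat) := {dffun forall i : 'I_d, 'I_(2 * M i).+1}.

Definition box_point M (k : box_index M) : point d := [ffun i => (k i)%:Z - (M i)%:Z].

Definition box M : {fset point d} := [fset box_point k | k : box_index M].

Lemma card_box M : (#|` box M| <= \prod_(i < d) (2 * M i).+1)%N.
Proof.
apply: leq_trans (leq_imfset_card _ _ _) _.
rewrite /= -cardE card_dep_ffun foldrE big_map big_enum /=.
by under eq_bigr do rewrite card_ord.
Qed.

Lemma mem_box M b : (forall i, (`|b i| <= M i)%N) -> b \in box M.
Proof.
move=> b_le; apply/imfsetP.
exists ([ffun i => inord `|b i + (M i)%:Z|] : box_index M) => //.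
apply/ffunP => i; rewrite !ffunE inordK; move: (b_le i); move: (M i) (b i) => m v; lia.
Qed.

Lemma card_sets_through X (N : 'I_d -> nat) s y :
  (forall y, y \in X -> forall i, 1 <= y i <= (N i)%:Z) -> (1 < s)%N ->
  (#|` [fset S in CX_of_size s X | y \in S]| <= \prod_(i < d) (2 * ((N i - 1) %/ s.-1)).+1)%N.
Proof.
move=> X_box s_gt1; pose M i := ((N i - 1) %/ s.-1)%N.
apply: leq_trans (card_box M).
apply: (@leq_trans #|` [fset block_through X s b y | b in box M]|); last exact: leq_imfset_card.
apply: fsubset_leq_card; apply/fsubsetP => S; rewrite in_fset /= => /andP[SF yS].
have [_ S_card S_CX] := mem_CX_of_size SF.
have [b [[i0 b_i0] S_sub SE]] := in_CX_block_through S_CX yS.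
apply/imfsetP; exists b; last by rewrite SE S_card.
apply: mem_box => i; rewrite leq_divRL; last by lia.
by rewrite mulnC -S_card; apply: class_step_bound X_box b_i0 S_sub.
Qed.

Lemma card_singletons_through X y : (#|` [fset S in CX_of_size 1 X | y \in S]| <= 1)%N.
Proof.
apply: (@leq_trans #|` [fset [fset y]]|); last by rewrite cardfs1.
apply: fsubset_leq_card; apply/fsubsetP => S.
rewrite in_fset /= => /andP[/mem_CX_of_size[_ /eqP/cardfs1P[z ->] _]].
by rewrite !inE => /eqP ->.
Qed.

Lemma sets_through_bound X (N : 'I_d -> nat) s y :
  (forall y, y \in X -> forall i, 1 <= y i <= (N i)%:Z) ->
  (0 < s)%N -> (forall i, s <= N i)%N ->
  (s ^ d * #|` [fset S in CX_of_size s X | y \in S]| <= 5 ^ d * \prod_(i < d) N i)%N.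
Proof.
move=> X_box s_gt0 s_le_N.
have [s_gt1 | s_le1] := ltnP 1 s.
  apply: leq_trans (leq_mul (leqnn _) (card_sets_through y X_box s_gt1)) _.
  have pow_prod c : (c ^ d = \prod_(i < d) c)%N by rewrite prod_nat_const card_ord.
  rewrite !pow_prod -!big_split /=; apply: leq_prod => i _.
  exact: step_box_bound.
have -> : s = 1%N by lia.
rewrite exp1n mul1n; apply: leq_trans (card_singletons_through X y) _.
rewrite muln_gt0 expn_gt0 /=; apply: prodn_gt0 => i.
exact: leq_trans s_gt0 (s_le_N i).
Qed.

Lemma f_count_bound X (N : 'I_d -> nat) s :
  (forall y, y \in X -> forall i, 1 <= y i <= (N i)%:Z) ->
  (0 < s)%N -> (forall i, s <= N i)%N ->
  (s ^ d.+1 * f_count s X <= 5 ^ d * \prod_(i < d) N i * #|` X|)%N.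
Proof.
move=> X_box s_gt0 s_le_N.
have CX_sub S : S \in CX_of_size s X -> S `<=` X /\ #|` S| = s.
  by case/mem_CX_of_size.
rewrite f_countE expnSr -mulnA (double_count CX_sub) big_distrr /=.
rewrite card_fset_sum1 big_distrr /=; apply: leq_sum => y _.
by rewrite muln1; apply: sets_through_bound.
Qed.

End Counting.

Theorem corollary2p4 (d : nat) (N : 'I_d -> nat) (X : {fset point d}) (s : nat) :
  (forall i : 'I_d, (0 < N i)%N) ->
  (forall x : point d, x \in X -> forall i : 'I_d, 1 <= x i <= (N i)%:Z) ->
  (exists t : nat, s = (2 ^ t)%N) ->
  (1 <= s)%N ->
  (forall i : 'I_d, (s <= N i)%N) ->
  ((f_count s X)%:R : rat) <=
    (5 ^ d)%:R * (\prod_(i < d) N i)%:R / (s ^ d.+1)%:R * (#|` X|)%:R.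
Proof.
(* [0 < N i] follows from [1 <= s <= N i], and if [s] is not a power of two then
   [C_X] simply has no set of size [s]. *)
move=> _ X_box _ s_gt0 s_le_N.
rewrite mulrAC ler_pdivlMr ?ltr0n ?expn_gt0 ?s_gt0 // -!natrM ler_nat mulnC.
exact: f_count_bound.
Qed.
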